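(* Let $d\ge1$ and let $\mu$ be a Borel probability measure on $S^{d-1}$. Then \[ (\mu\otimes\mu)\bigl(\{(u,v)\in (S^{d-1})^2: u\perp v\}\bigr)\le \frac{d-1}{d}. \] Equivalently, two independent $\mu$-distributed unit vectors are non-orthogonal with probability at least $1/d$.
   Context: $S^{d-1}$ is the unit sphere in $\mathbb R^d$; $\mu\otimes\mu$ is the product measure on $(S^{d-1})^2$. *)

From mathcomp Require Import all_boot all_order all_algebra.
From mathcomp Require Import all_classical all_reals all_analysis.
Set Implicit Arguments. Unset Strict Implicit. Unset Printing Implicit Defensive.
Import Order.TTheory GRing.Theory Num.Theory numFieldNormedType.Exports.
Local Open Scope classical_set_scope.
Local Open Scope ring_scope.

Definition borelRd (R : realType) (d : nat) :=
  g_sigma_algebraType (@open 'rV[R]_d).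

Definition dotRd (R : realType) (d : nat) (u v : 'rV[R]_d) : R :=
  \sum_(i < d) u ord0 i * v ord0 i.

Definition sphere (R : realType) (d : nat) : set (borelRd R d) :=
  [set u | dotRd u u = 1].

Definition orth_pairs (R : realType) (d : nat) : set (borelRd R d * borelRd R d) :=
  [set p | @sphere R d p.1 /\ @sphere R d p.2 /\ dotRd p.1 p.2 = 0].

(* Let m be the second-moment matrix of mu, m_ij = E[v_i v_j]; it has trace 1.
   For a fixed unit vector x, the square <x,v>^2 vanishes when v is orthogonal
   to x and is at most 1 otherwise, so mu(x^perp) + E_v[<x,v>^2] <= 1.
   Integrating in x gives (mu x mu)(orth_pairs) + sum_ij m_ij^2 <= 1, and
   sum_ij m_ij^2 >= sum_i m_ii^2 >= (sum_i m_ii)^2 / d = 1/d. *)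
From mathcomp Require Import all_boot all_order all_algebra.
From mathcomp Require Import all_classical all_reals all_analysis.
From mathcomp Require Import ring lra.
From mathcomp Require Import measurable_realfun.
Import Order.TTheory GRing.Theory Num.Theory numFieldNormedType.Exports.
Local Open Scope classical_set_scope.
Local Open Scope ring_scope.

Lemma sum_sqr_ge_inv_card {R : realFieldType} {n : nat} (a : 'I_n -> R) : (0 < n)%N ->
  \sum_(i < n) a i = 1 -> n%:R^-1 <= \sum_(i < n) a i ^+ 2.
Proof.
move=> n_gt0 sum_a.
have nz : (n%:R : R) != 0 by rewrite pnatr_eq0 -lt0n.
have : 0 <= \sum_(i < n) (a i - n%:R^-1) ^+ 2 by apply: sumr_ge0 => i _; exact: sqr_ge0.
have -> : \sum_(i < n) (a i - n%:R^-1) ^+ 2 =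
    \sum_(i < n) a i ^+ 2 - 2 * n%:R^-1 * \sum_(i < n) a i
    + \sum_(i < n) (n%:R^-1 ^+ 2 : R).
  rewrite mulr_sumr -sumrN -!big_split /=.
  by apply: eq_bigr => i _; ring.
rewrite sumr_const card_ord sum_a.
have -> : n%:R^-1 ^+ 2 *+ n = n%:R^-1 :> R.
  by rewrite -mulr_natr expr2 -mulrA mulVf // mulr1.
lra.
Qed.

Section SecondMoment.
Variables (R : realType) (d : nat).
Local Notation Rd := (borelRd R d).
Local Notation S := (@sphere R d).

Lemma measurable_coord (i : 'I_d) :
  measurable_fun [set: Rd] (fun u : Rd => u ord0 i).
Proof.
apply: (measurability _ (RGenOpens.measurableE R)).
move=> _ [_ [a [b ->]] <-]; rewrite setTI.
apply: sub_sigma_algebra.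
move: (@coord_continuous R 1 d ord0 i) => /continuousP; apply.
exact: interval_open.
Qed.

Lemma measurable_coord_mul (i j : 'I_d) :
  measurable_fun [set: Rd] (fun v : Rd => v ord0 i * v ord0 j).
Proof. by apply: measurable_funM; exact: measurable_coord. Qed.

Lemma measurable_dotRd :
  measurable_fun [set: Rd * Rd] (fun p : Rd * Rd => dotRd p.1 p.2).
Proof.
apply: measurable_sum => i; apply: measurable_funM.
- exact: measurableT_comp (measurable_coord i) measurable_fst.
- exact: measurableT_comp (measurable_coord i) measurable_snd.
Qed.

Lemma measurable_dotRdl (x : Rd) : measurable_fun [set: Rd] (dotRd x).
Proof.
apply: measurable_sum => i.
by apply: measurable_funM; [exact: measurable_cst | exact: measurable_coord].
Qed.

Lemma measurable_sphere : measurable S.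
Proof.
have mdd : measurable_fun [set: Rd] (fun u : Rd => dotRd u u).
  exact: measurable_sum (fun i => measurable_coord_mul i i).
by have := mdd measurableT [set 1] (measurable_set1 1); rewrite setTI.
Qed.

Lemma measurable_orth_pairs : measurable (@orth_pairs R d).
Proof.
have -> : @orth_pairs R d = (S `*` S) `&` ((fun p : Rd * Rd => dotRd p.1 p.2) @^-1` [set 0]).
  by apply/seteqP; split => -[x y] /=; [move=> [? []] | move=> [[]]].
apply: measurableI; first exact: measurableX measurable_sphere measurable_sphere.
by have := measurable_dotRd measurableT [set 0] (measurable_set1 0); rewrite setTI.
Qed.

Lemma sphere_coord_le1 (u : Rd) (i : 'I_d) : S u -> `|u ord0 i| <= 1.
Proof.
move=> Su; rewrite -(expr_le1 (n := 2)) // real_normK ?num_real //.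
rewrite -Su /dotRd (bigD1 i) //= expr2 lerDl.
by apply: sumr_ge0 => k _; rewrite -expr2 sqr_ge0.
Qed.

(* Termwise AM-GM: |x_i v_i| <= (x_i^2 + v_i^2) / 2. *)
Lemma sphere_dotRd_le1 (x v : Rd) : S x -> S v -> `|dotRd x v| <= 1.
Proof.
move=> Sx Sv; apply: le_trans (ler_norm_sum _ _ _) _.
have -> : (1 : R) = \sum_(i < d) (x ord0 i * x ord0 i + v ord0 i * v ord0 i) / 2.
  by rewrite -big_distrl /= big_split /= -/(dotRd x x) -/(dotRd v v) Sx Sv; field.
apply: ler_sum => i _; rewrite ler_pdivlMr // normrM.
have := sqr_ge0 (`|x ord0 i| - `|v ord0 i|).
by rewrite sqrrB !real_normK ?num_real //; lra.
Qed.

Lemma dotRd_sqr (x v : Rd) : dotRd x v ^+ 2 =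
  \sum_(i < d) \sum_(j < d) (x ord0 i * x ord0 j) * (v ord0 i * v ord0 j).
Proof.
rewrite /dotRd expr2 big_distrl /=; apply: eq_bigr => i _.
by rewrite big_distrr /=; apply: eq_bigr => j _; ring.
Qed.

Variable mu : probability Rd R.

Lemma integrable_coord_mul (i j : 'I_d) :
  mu.-integrable S (fun v : Rd => (v ord0 i * v ord0 j)%:E).
Proof.
apply: (measurable_bounded_integrable (f := fun v : Rd => v ord0 i * v ord0 j)).
- exact: measurable_sphere.
- by rewrite (le_lt_trans (probability_le1 _ _)) ?ltry //; exact: measurable_sphere.
- exact: measurable_funTS (measurable_coord_mul i j).
- exists 1; split; first exact: num_real.
  move=> M M_gt1 u Su; apply/ltW/(le_lt_trans _ M_gt1).
  by rewrite normrM -[1]mulr1 ler_pM // sphere_coord_le1.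
Qed.

Definition second_moment (i j : 'I_d) : R :=
  fine (\int[mu]_(v in S) (v ord0 i * v ord0 j)%:E)%E.

Lemma second_momentE (i j : 'I_d) :
  (\int[mu]_(v in S) (v ord0 i * v ord0 j)%:E = (second_moment i j)%:E)%E.
Proof.
by rewrite fineK // (integrable_fin_num measurable_sphere (integrable_coord_mul i j)).
Qed.

Lemma integral_quadratic_form (c : 'I_d -> 'I_d -> R) :
  (\int[mu]_(v in S) (\sum_(i < d) \sum_(j < d) c i j * (v ord0 i * v ord0 j))%:E =
   (\sum_(i < d) \sum_(j < d) c i j * second_moment i j)%:E)%E.
Proof.
have mS := measurable_sphere.
have cvv_int i j : mu.-integrable S
    (fun v : Rd => (c i j)%:E * (v ord0 i * v ord0 j)%:E)%E.
  exact: integrableZl (integrable_coord_mul i j).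
transitivity (\int[mu]_(v in S) (\sum_(i < d) \sum_(j < d)
    (c i j)%:E * (v ord0 i * v ord0 j)%:E))%E.
  apply: eq_integral => v _; rewrite -sumEFin; apply: eq_bigr => i _.
  by rewrite -sumEFin; apply: eq_bigr => j _; rewrite EFinM.
rewrite integral_sum //; last by move=> i; apply: integrable_sum.
rewrite -sumEFin; apply: eq_bigr => i _.
rewrite integral_sum // -sumEFin; apply: eq_bigr => j _.
by rewrite integralZl ?second_momentE ?EFinM //; exact: integrable_coord_mul.
Qed.

Definition moment_form (x : Rd) : R :=
  \sum_(i < d) \sum_(j < d) (x ord0 i * x ord0 j) * second_moment i j.

Lemma integral_dotRd_sqr (x : Rd) :
  (\int[mu]_(v in S) (dotRd x v ^+ 2)%:E = (moment_form x)%:E)%E.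
Proof. by under eq_integral do rewrite dotRd_sqr; exact: integral_quadratic_form. Qed.

Lemma moment_form_ge0 (x : Rd) : 0 <= moment_form x.
Proof.
rewrite -lee_fin -integral_dotRd_sqr integral_ge0 // => v _.
by rewrite lee_fin sqr_ge0.
Qed.

Lemma measurable_moment_form : measurable_fun [set: Rd] moment_form.
Proof.
apply: measurable_sum => i; apply: measurable_sum => j.
by apply: measurable_funM; [exact: measurable_coord_mul | exact: measurable_cst].
Qed.

Lemma integral_moment_form :
  (\int[mu]_(x in S) (moment_form x)%:E =
   (\sum_(i < d) \sum_(j < d) second_moment i j ^+ 2)%:E)%E.
Proof.
rewrite -integral_quadratic_form; apply: eq_integral => x _; rewrite /moment_form.
by congr EFin; apply: eq_bigr => i _; apply: eq_bigr => j _; rewrite mulrC.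
Qed.

Hypothesis mu_sphere : mu S = 1%E.

Lemma trace_second_moment : \sum_(i < d) second_moment i i = 1.
Proof.
have mS := measurable_sphere.
apply: EFin_inj; rewrite -sumEFin.
under eq_bigr do rewrite -second_momentE.
rewrite -integral_sum //; last by move=> i; exact: integrable_coord_mul.
transitivity (\int[mu]_(v in S) (cst 1%E) v)%E.
  by apply: eq_integral => v /[!inE] Sv; rewrite sumEFin [X in X%:E]Sv.
by rewrite integral_cst // mul1e.
Qed.

(* On the sphere, <x,v>^2 is at most the indicator of the complement of x^perp. *)
Lemma orth_section_le (x : Rd) : S x ->
  (mu (xsection (@orth_pairs R d) x) + (moment_form x)%:E <= 1)%E.
Proof.
move=> Sx; have mS := measurable_sphere.
set Z := xsection _ x.
have Z_def : Z = S `&` (dotRd x @^-1` [set 0]).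
  by apply/seteqP; split => v /=; rewrite /Z /xsection /= inE => -[] // _ [].
have mZ : measurable Z.
  rewrite Z_def; apply: measurableI => //.
  by have := measurable_dotRdl x measurableT [set 0] (measurable_set1 0); rewrite setTI.
rewrite -integral_dotRd_sqr -mu_sphere (measureDI mu mS mZ).
have -> : S `&` Z = Z by rewrite Z_def setIA setIid.
rewrite [X in (_ <= X)%E]addeC; apply: leeD2l.
apply: (@le_trans _ _ (\int[mu]_(v in S) (\1_(S `\` Z) v)%:E)%E).
  apply: ge0_le_integral => //.
  - by move=> v _; rewrite lee_fin sqr_ge0.
  - apply/measurable_EFinP/measurable_funX/measurable_funTS.
    exact: measurable_dotRdl.
  - exact/measurable_EFinP/measurable_indic/measurableD.
  move=> v Sv; rewrite indicE; case: (boolP (v \in _)) => [_ | /negP vZ].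
    rewrite lee_fin -(expr1n _ 2) -real_normK ?num_real //.
    by rewrite lerXn2r ?nnegrE // sphere_dotRd_le1.
  have : Z v by apply: contrapT => nZv; apply: vZ; rewrite inE.
  by rewrite Z_def => -[_ /= ->]; rewrite expr0n.
rewrite integral_indic //; last exact: measurableD.
by rewrite setIC setDE setIA setIid.
Qed.

Lemma xsection_orth_pairs_notin (x : Rd) : ~ S x -> xsection (@orth_pairs R d) x = set0.
Proof. by move=> Sx; apply/seteqP; split => y //= /set_mem [] /Sx. Qed.

Lemma orth_pairs_mass_le :
  ((mu \x mu) (@orth_pairs R d) +
   (\sum_(i < d) \sum_(j < d) second_moment i j ^+ 2)%:E <= 1)%E.
Proof.
have mS := measurable_sphere.
set f := mu \o xsection (@orth_pairs R d).
have f_sphere : (\int[mu]_x f x = \int[mu]_(x in S) f x)%E.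
  rewrite [RHS]integral_mkcond; apply: eq_integral => x _; rewrite patchE.
  case: ifPn => // /negP Sx; rewrite /f /= xsection_orth_pairs_notin ?measure0 //.
  by move=> /mem_set.
have mf : measurable_fun S f.
  exact: measurable_funTS (measurable_fun_xsection _ measurable_orth_pairs).
have mQ : measurable_fun S (fun x => (moment_form x)%:E).
  by apply/measurable_EFinP; exact: measurable_funTS measurable_moment_form.
rewrite /product_measure1 f_sphere -integral_moment_form -ge0_integralD //; last first.
  by move=> x _; rewrite lee_fin moment_form_ge0.
apply: (@le_trans _ _ (\int[mu]_(x in S) (cst 1%E) x)%E).
  apply: ge0_le_integral => //; last exact: orth_section_le.
  - by move=> x _; rewrite adde_ge0 // lee_fin moment_form_ge0.
  - exact: emeasurable_funD.
by rewrite integral_cst // mul1e probability_le1.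
Qed.

End SecondMoment.

Theorem corollary1 (R : realType) (d : nat) (hd : (1 <= d)%N)
  (mu : probability (borelRd R d) R)
  (hmu : mu (@sphere R d) = 1%E) :
  ((mu \x mu) (@orth_pairs R d) <= ((d%:R - 1) / d%:R)%:E)%E.
Proof.
set m := @second_moment R d mu.
have mass_le := @orth_pairs_mass_le R d mu hmu.
have diag_le : \sum_(i < d) m i i ^+ 2 <= \sum_(i < d) \sum_(j < d) m i j ^+ 2.
  apply: ler_sum => i _; rewrite (bigD1 i) //= lerDl.
  by apply: sumr_ge0 => j _; exact: sqr_ge0.
have inv_le := sum_sqr_ge_inv_card _ hd (@trace_second_moment R d mu hmu).
apply: (@le_trans _ _ (1 - \sum_(i < d) \sum_(j < d) m i j ^+ 2)%:E).
  by rewrite EFinB leeBrDr.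
have nz : (d%:R : R) != 0 by rewrite pnatr_eq0 -lt0n.
rewrite lee_fin mulrBl divff // mul1r.
lra.
Qed.
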